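(* Let $K$ be an infinite field, $n\ge 2$, and let $p(x_1,\dots,x_m)\in K\langle x_1,\dots,x_m\rangle$ be a multilinear polynomial which, evaluated on $M_n(K)$, is neither a polynomial identity nor a central polynomial. Then $\operatorname{Im} p$ contains a matrix of the form $c_n e_{n,1}+\sum_{i=1}^{n-1}c_i e_{i,i+1}$ with $c_1,\dots,c_n\neq 0$. Consequently, when $\operatorname{char}K$ is $0$ or prime to $n$, $\operatorname{Im} p$ contains a matrix whose eigenvalues (in an algebraic closure of $K$) are $c,c\varepsilon,\dots,c\varepsilon^{n-1}$ for some $c\neq 0$, where $\varepsilon$ is a primitive $n$-th root of $1$.
   Context: $K\langle x_1,\dots,x_m\rangle$ is the free associative algebra (noncommutative polynomials). A polynomial is multilinear if it has the form $\sum_{\sigma\in S_m}c_\sigma x_{\sigma(1)}\cdots x_{\sigma(m)}$ with $c_\sigma\in K$. For an algebra $R$, $\operatorname{Im} p=\{p(a_1,\dots,a_m): a_i\in R\}$. $p$ is a polynomial identity (PI) of $R$ if $\operatorname{Im} p=\{0\}$, and a central polynomial if $\operatorname{Im} p$ is contained in the center of $R$ (the scalar matrices for $R=M_n(K)$) but $p$ is not a PI. $e_{i,j}$ denote the matrix units. *)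

From HB Require Import structures.
From mathcomp Require Import all_boot all_order all_algebra all_fingroup.
Set Implicit Arguments. Unset Strict Implicit. Unset Printing Implicit Defensive.
Import GRing.Theory.
Local Open Scope ring_scope.

Definition infinite_field (K : fieldType) : Prop :=
  forall s : seq K, exists x : K, x \notin s.

(* A multilinear polynomial in x_1..x_m is given by its coefficients
   c_sigma, sigma in S_m:  p = \sum_sigma c_sigma x_{sigma 1} ... x_{sigma m}. *)
Definition mlin_eval (K : fieldType) (n m : nat) (c : {perm 'I_m} -> K)
  (a : 'I_m -> 'M[K]_n) : 'M[K]_n :=
  \sum_(s : {perm 'I_m}) c s *: \prod_(i < m) a (s i).

Definition mlin_PI (K : fieldType) (n m : nat) (c : {perm 'I_m} -> K) : Prop :=
  forall a : 'I_m -> 'M[K]_n, mlin_eval c a = 0.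

Definition mlin_central (K : fieldType) (n m : nat) (c : {perm 'I_m} -> K) : Prop :=
  (forall a : 'I_m -> 'M[K]_n, is_scalar_mx (mlin_eval c a)) /\ ~ mlin_PI n c.

(* The matrix c_n e_{n,1} + \sum_{i<n} c_i e_{i,i+1} (0-indexed: entry (i, i+1 mod n) is c i). *)
Definition cyc_mx (K : fieldType) (n : nat) (c : 'I_n -> K) : 'M[K]_n :=
  \matrix_(i, j) (if val j == ((val i).+1 %% n)%N then c i else 0).

From HB Require Import structures.
From mathcomp Require Import all_boot all_order all_algebra all_fingroup all_field.
From mathcomp Require Import cyclic.
From Stdlib Require Import Classical.
Set Implicit Arguments. Unset Strict Implicit. Unset Printing Implicit Defensive.
Import GRing.Theory.
Local Open Scope ring_scope.

(* By multilinearity it suffices to look at evaluations on matrix units.  A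
   nonzero entry (x, y) of p(e_{r_1 t_1}, ..., e_{r_m t_m}) forces
   h y - h x = \sum_i (h t_i - h r_i) for every map h of the indices into an
   abelian group.  As p is neither a PI nor central, some such evaluation has a
   nonzero off-diagonal entry (x0, y0).  Relabel the indices so that x0, y0
   become 0, 1 in Z/n: then every cyclic shift of the substitution, chosen
   independently for each variable, has total displacement 1, so its value is
   supported on the cyclic superdiagonal, and the constant shift by k carries
   the original nonzero entry to (k, k+1).  Substituting
   x_i := \sum_k T^(k n^i) (shift by k of e_{r_i t_i}), each entry (x, x+1)
   becomes a polynomial in T whose monomials are indexed injectively by the
   shift assignments (base-n digits); it is nonzero, and as K is infinite some
   T makes all n of them nonzero.  Finally, a diagonal conjugation turns
   c_n e_{n,1} + \sum c_i e_{i,i+1} into the companion matrix of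
   X^n - c_1 ... c_n, whose roots are c, c e, ..., c e^(n-1). *)

Section MultilinearEval.

Variables (K : fieldType) (n m : nat) (c : {perm 'I_m} -> K).

Lemma eq_mlin_eval (a b : 'I_m -> 'M[K]_n.+1) : a =1 b -> mlin_eval c a = mlin_eval c b.
Proof.
move=> eq_ab; apply: eq_bigr => s _; congr (_ *: _).
by apply: eq_bigr => i _; rewrite eq_ab.
Qed.

Lemma mlin_eval_conj (g h : 'M[K]_n.+1) (a : 'I_m -> 'M[K]_n.+1) :
  g * h = 1 -> h * g = 1 ->
  mlin_eval c (fun i => g * a i * h) = g * mlin_eval c a * h.
Proof.
move=> gh hg; have prod_conj (I : Type) (r : seq I) (F : I -> 'M[K]_n.+1) :
    \prod_(i <- r) (g * F i * h) = g * \prod_(i <- r) F i * h.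
  elim: r => [|j r IH]; first by rewrite !big_nil mulr1 gh.
  by rewrite !big_cons IH !mulrA -[g * F j * h * g]mulrA hg mulr1.
rewrite /mlin_eval mulr_sumr mulr_suml; apply: eq_bigr => s _.
by rewrite prod_conj -!mulmxE scalemxAl scalemxAr.
Qed.

Lemma mlin_eval_expand (J : finType) (w : 'I_m -> J -> K) (B : 'I_m -> J -> 'M[K]_n.+1) :
  mlin_eval c (fun i => \sum_k w i k *: B i k) =
  \sum_(f : {ffun 'I_m -> J}) (\prod_i w i (f i)) *: mlin_eval c (fun i => B i (f i)).
Proof.
have expand_term (s : {perm 'I_m}) : \prod_i (\sum_k w (s i) k *: B (s i) k) =
    \sum_(f : {ffun 'I_m -> J}) (\prod_i w i (f i)) *: \prod_i B (s i) (f (s i)).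
  rewrite (bigA_distr_bigA (fun j k => w (s j) k *: B (s j) k)).
  rewrite (reindex (fun f : {ffun 'I_m -> J} => [ffun j => f (s j)])); last first.
    exists (fun f : {ffun 'I_m -> J} => [ffun i => f ((s^-1)%g i)]) => f _;
      by apply/ffunP => i; rewrite !ffunE ?permK ?permKV.
  apply: eq_bigr => f _; rewrite scaler_prod; congr (_ *: _).
    rewrite [RHS](reindex_inj (@perm_inj _ s)); apply: eq_bigr => i _; by rewrite ffunE.
  by apply: eq_bigr => i _; rewrite ffunE.
rewrite /mlin_eval; under eq_bigr => s _ do rewrite expand_term scaler_sumr.
rewrite exchange_big; apply: eq_bigr => f _.
by rewrite scaler_sumr; apply: eq_bigr => s _; rewrite !scalerA mulrC.
Qed.

Lemma mlin_eval_delta_expand (a : 'I_m -> 'M[K]_n.+1) :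
  mlin_eval c a = \sum_(f : {ffun 'I_m -> 'I_n.+1 * 'I_n.+1})
    (\prod_i a i (f i).1 (f i).2) *: mlin_eval c (fun i => delta_mx (f i).1 (f i).2).
Proof.
rewrite -(mlin_eval_expand (fun i p => a i p.1 p.2) (fun _ p => delta_mx p.1 p.2)).
apply: eq_mlin_eval => i.
by rewrite [LHS]matrix_sum_delta pair_bigA.
Qed.

End MultilinearEval.

Lemma sumr_neq0_exists (R : nmodType) (I : finType) (F : I -> R) :
  \sum_i F i != 0 -> exists i, F i != 0.
Proof.
move=> sum_neq0; have /existsP [i Fi] : [exists i, F i != 0]; last by exists i.
apply: contraR sum_neq0 => /existsPn F0; apply/eqP/big1 => i _.
by apply/eqP/negbNE/F0.
Qed.

Section DeltaFlow.

Variables (K : fieldType) (n m : nat) (c : {perm 'I_m} -> K).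
Variables (G : zmodType) (h : 'I_n.+1 -> G) (r t : 'I_m -> 'I_n.+1).

Lemma prod_delta_mx_flow (l : seq 'I_m) x y :
  (\prod_(i <- l) delta_mx (r i) (t i) : 'M[K]_n.+1) x y != 0 ->
  h y - h x = \sum_(i <- l) (h (t i) - h (r i)).
Proof.
elim: l x => [|j l IH] x /=.
  by rewrite big_nil mxE; case: (eqVneq x y) => [->|] /=; rewrite ?subrr ?big_nil ?eqxx.
rewrite big_cons -mulmxE mxE => /sumr_neq0_exists [z]; rewrite mxE.
case: (eqVneq x (r j)) => [->|_]; last by rewrite /= mul0r eqxx.
case: (eqVneq z (t j)) => [->|_]; last by rewrite /= mul0r eqxx.
by rewrite mul1r => /IH flow; rewrite big_cons -flow [RHS]addrC [RHS]addrA subrK.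
Qed.

Lemma mlin_eval_delta_flow x y :
  mlin_eval c (fun i => delta_mx (r i) (t i)) x y != 0 ->
  h y - h x = \sum_i (h (t i) - h (r i)).
Proof.
rewrite /mlin_eval summxE => /sumr_neq0_exists [s]; rewrite mxE => Es.
have : (\prod_(i < m) delta_mx (r (s i)) (t (s i)) : 'M[K]_n.+1) x y != 0.
  by apply: contra Es => /eqP ->; rewrite mulr0.
rewrite -(big_map s xpredT (fun j => delta_mx (r j) (t j))) => /prod_delta_mx_flow ->.
by rewrite big_map [RHS](reindex_inj (@perm_inj _ s)).
Qed.

End DeltaFlow.

Lemma nonscalar_offdiag_conj (K : fieldType) n (A : 'M[K]_n.+1) :
  ~~ is_scalar_mx A ->
  exists g h u v, [/\ g * h = 1, h * g = 1, u != v & (g * A * h) u v != 0].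
Proof.
move=> nonscalar.
have [/existsP [u /existsP [v /andP [uv Auv]]]|/existsPn offdiag0] :=
  boolP [exists u, exists v, (u != v) && (A u v != 0)].
  by exists 1, 1, u, v; rewrite !mul1r mulr1.
have diagA u v : u != v -> A u v = 0.
  by move=> uv; have /existsPn/(_ v) := offdiag0 u; rewrite uv /= negbK => /eqP.
have /existsP [u Auu] : [exists u, A u u != A ord0 ord0].
  apply: contraR nonscalar => /existsPn diag_const; apply/is_scalar_mxP.
  exists (A ord0 ord0); apply/matrixP => i j; rewrite mxE.
  case: (eqVneq i j) => [<-|ij]; last by rewrite mulr0n diagA.
  by rewrite mulr1n; apply/eqP/negbNE/diag_const.
have u0 : ord0 != u by apply: contra Auu => /eqP <-.
(* For diagonal A, conjugating by the transvection 1 + e_{u,0} puts A_00 - A_uu at (u, 0). *)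
pose d := delta_mx u ord0 : 'M[K]_n.+1.
have dd : d * d = 0 by rewrite -mulmxE mul_delta_mx_cond (negbTE u0) mulr0n.
have dA i j : (d * A) i j = (i == u)%:R * A ord0 j.
  rewrite -mulmxE mxE (bigD1 ord0) //= big1 ?addr0; first by rewrite mxE eqxx andbT.
  by move=> k k0; rewrite mxE (negbTE k0) andbF mul0r.
have Xd (X : 'M[K]_n.+1) i j : (X * d) i j = X i u * (j == ord0)%:R.
  rewrite -mulmxE mxE (bigD1 u) //= big1 ?addr0; first by rewrite mxE eqxx.
  by move=> k ku; rewrite mxE (negbTE ku) mulr0.
exists (1 + d), (1 - d), u, ord0; split.
- by rewrite mulrDl mul1r mulrBr mulr1 dd subr0 subrK.
- by rewrite mulrBl mul1r mulrDr mulr1 dd addr0 addrK.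
- by rewrite eq_sym.
have -> : (1 + d) * A * (1 - d) = A + d * A - (A * d + d * A * d).
  by rewrite mulrDl mul1r mulrBr mulr1 mulrDl.
rewrite mxE [X in _ + X]mxE [X in X - _]mxE [X in - X]mxE !Xd !dA !eqxx !mul1r !mulr1.
rewrite (diagA _ _ u0) (diagA u ord0) 1?eq_sym // add0r addr0.
by rewrite eq_sym subr_eq0 eq_sym.
Qed.

Lemma mlin_eval_delta_offdiag (K : fieldType) n m (c : {perm 'I_m} -> K) :
  ~ mlin_PI n.+1 c -> ~ mlin_central n.+1 c ->
  exists (r t : 'I_m -> 'I_n.+1) x y,
    x != y /\ mlin_eval c (fun i => delta_mx (r i) (t i)) x y != 0.
Proof.
move=> notPI notcentral.
have [a nonscalar] : exists a, ~~ is_scalar_mx (mlin_eval (n := n.+1) c a).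
  apply: NNPP => allscalar; apply: notcentral; split => // a.
  by apply: NNPP => nonscalar; apply: allscalar; exists a; apply/negP.
have [g [h [u [v [gh hg uv]]]]] := nonscalar_offdiag_conj nonscalar.
rewrite -mlin_eval_conj // mlin_eval_delta_expand summxE => /sumr_neq0_exists [f].
rewrite mxE => Ef; exists (fun i => (f i).1), (fun i => (f i).2), u, v; split => //.
by apply: contra Ef => /eqP ->; rewrite mulr0.
Qed.

Lemma perm_map2 (T : finType) (x y u v : T) :
  x != y -> u != v -> exists s : {perm T}, s x = u /\ s y = v.
Proof.
move=> xy uv; pose s1 := tperm x u.
have s1y : s1 y != u by rewrite -[u](tpermL x) (inj_eq perm_inj) eq_sym.
exists (s1 * tperm (s1 y) v)%g; rewrite !permM tpermL tpermL; split=> //.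
by rewrite tpermD // eq_sym.
Qed.

Lemma val_addZp1 N (i : 'I_N.+2) : val (i + 1) = ((val i).+1 %% N.+2)%N.
Proof. by rewrite /= (modn_small (_ : 1 < N.+2)%N) // addn1. Qed.

Definition digits_val n m (f : {ffun 'I_m -> 'I_n}) : nat := \sum_(i < m) f i * n ^ i.

Lemma digits_val_inj n m : injective (@digits_val n m).
Proof.
elim: m => [|m IH] f g; first by move=> _; apply/ffunP => -[].
have split_low (h : {ffun 'I_m.+1 -> 'I_n}) : digits_val h =
    (h ord0 + n * digits_val [ffun i : 'I_m => h (lift ord0 i)])%N.
  rewrite /digits_val big_ord_recl expn0 muln1 big_distrr /=; congr (_ + _)%N.
  by apply: eq_bigr => i _; rewrite ffunE expnS mulnCA.
rewrite !split_low => eq_fg.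
have eq0 : f ord0 = g ord0.
  apply/val_inj; have := congr1 (modn^~ n) eq_fg.
  by rewrite ![(_ + n * _)%N]addnC ![(n * _)%N]mulnC !modnMDl !modn_small.
have /IH eq_tail : digits_val [ffun i : 'I_m => f (lift ord0 i)] =
                  digits_val [ffun i : 'I_m => g (lift ord0 i)].
  have n_gt0 : (0 < n)%N := leq_ltn_trans (leq0n _) (ltn_ord (f ord0)).
  by move: eq_fg; rewrite eq0 => /addnI /eqP; rewrite eqn_pmul2l // => /eqP.
apply/ffunP => i; case: (unliftP ord0 i) => [j ->|->] //.
by move/ffunP: eq_tail => /(_ j); rewrite !ffunE.
Qed.

Lemma digits_poly_neq0 (K : fieldType) n m (w : {ffun 'I_m -> 'I_n} -> K) f0 :
  w f0 != 0 -> \sum_f w f *: 'X^(digits_val f) != 0 :> {poly K}.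
Proof.
move=> wf0; apply: (contraNneq _ wf0).
move=> /(congr1 (fun q : {poly K} => q`_(digits_val f0))).
rewrite coef0 coef_sum (bigD1 f0) //= coefZ coefXn eqxx mulr1 big1 ?addr0 => [/eqP //|f ff0].
by rewrite coefZ coefXn (inj_eq (@digits_val_inj n m)) eq_sym (negbTE ff0) mulr0.
Qed.

Lemma infinite_field_nonroot (K : fieldType) (I : finType) (q : I -> {poly K}) :
  infinite_field K -> (forall i, q i != 0) -> exists x, forall i, ~~ root (q i) x.
Proof.
move=> infK q_neq0; pose Q := \prod_i q i.
have Q_neq0 : Q != 0 by apply/prodf_neq0 => i _.
have [s [s_uniq s_size]] : exists s : seq K, uniq s /\ size s = size Q.
  elim: (size Q) => [|k [s [s_uniq s_size]]]; first by exists [::].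
  by have [x xs] := infK s; exists (x :: s); rewrite /= xs s_uniq s_size.
have [allroot|/allPn [x _ Qx]] := boolP (all (root Q) s).
  by move: Q_neq0; rewrite (roots_geq_poly_eq0 allroot s_uniq) ?s_size ?eqxx.
by exists x; move: Qx; rewrite /root horner_prod => /prodf_neq0 Qx i; apply: Qx.
Qed.

Section PermConj.

Variables (K : fieldType) (n : nat) (s : {perm 'I_n.+1}).

Lemma perm_mx_mulV : perm_mx s * perm_mx s^-1 = 1 :> 'M[K]_n.+1.
Proof. by rewrite -mulmxE -perm_mxM mulgV perm_mx1. Qed.

Lemma perm_mx_Vmul : perm_mx s^-1 * perm_mx s = 1 :> 'M[K]_n.+1.
Proof. by rewrite -mulmxE -perm_mxM mulVg perm_mx1. Qed.

Lemma perm_mx_conjE (A : 'M[K]_n.+1) i j :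
  (perm_mx s * A * perm_mx s^-1) i j = A (s i) (s j).
Proof. by rewrite -!mulmxE -mulmxA -col_permE -row_permE !mxE. Qed.

Lemma perm_mx_conj_delta a b :
  perm_mx s * delta_mx a b * perm_mx s^-1 = delta_mx (s^-1 a)%g (s^-1 b)%g :> 'M[K]_n.+1.
Proof.
apply/matrixP => i j; rewrite perm_mx_conjE !mxE.
by congr (_ && _)%:R; apply/eqP/eqP => [<-|->]; rewrite ?permK ?permKV.
Qed.

End PermConj.

Section CyclicEvaluation.

Variables (K : fieldType) (N m : nat) (c : {perm 'I_m} -> K).
Variables (r t : 'I_m -> 'I_N.+2) (x0 y0 : 'I_N.+2) (pi : {perm 'I_N.+2}).
Hypotheses (pi_x0 : pi x0 = 0) (pi_y0 : pi y0 = 1).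
Hypothesis E0_neq0 : mlin_eval c (fun i => delta_mx (r i) (t i)) x0 y0 != 0.

Definition shift_perm (k : 'I_N.+2) : {perm 'I_N.+2} := (pi * perm (addIr k))%g.

Lemma shift_permE k z : shift_perm k z = pi z + k.
Proof. by rewrite permM permE. Qed.

Definition shifted_eval (f : {ffun 'I_m -> 'I_N.+2}) : 'M[K]_N.+2 :=
  mlin_eval c (fun i => delta_mx (shift_perm (f i) (r i)) (shift_perm (f i) (t i))).

Lemma shifted_eval_supp f x y : shifted_eval f x y != 0 -> y = x + 1.
Proof.
have flow0 : 1 = \sum_i (pi (t i) - pi (r i)).
  by rewrite -(mlin_eval_delta_flow (fun z => pi z) E0_neq0) pi_x0 pi_y0 subr0.
rewrite /shifted_eval => /(mlin_eval_delta_flow id) /= flow.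
have -> : y = x + (y - x) by rewrite addrC subrK.
congr (_ + _); rewrite flow flow0; apply: eq_bigr => i _.
by rewrite !shift_permE opprD addrACA subrr addr0.
Qed.

Lemma shifted_eval_const k :
  shifted_eval [ffun => k] k (k + 1) = mlin_eval c (fun i => delta_mx (r i) (t i)) x0 y0.
Proof.
pose s := (shift_perm k)^-1%g.
have -> : shifted_eval [ffun => k] =
    perm_mx s * mlin_eval c (fun i => delta_mx (r i) (t i)) * perm_mx s^-1.
  rewrite -mlin_eval_conj ?perm_mx_mulV ?perm_mx_Vmul //; apply: eq_mlin_eval => i.
  by rewrite perm_mx_conj_delta invgK ffunE.
rewrite perm_mx_conjE; congr (_ _ _); apply: (@perm_inj _ (shift_perm k)); rewrite permKV.
  by rewrite shift_permE pi_x0 add0r.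
by rewrite shift_permE pi_y0 addrC.
Qed.

Lemma cyc_mx_in_image :
  infinite_field K ->
  exists (a : 'I_m -> 'M[K]_N.+2) (d : 'I_N.+2 -> K),
    (forall i, d i != 0) /\ mlin_eval c a = cyc_mx d.
Proof.
move=> infK.
pose q x : {poly K} := \sum_f shifted_eval f x (x + 1) *: 'X^(digits_val f).
have q_neq0 x : q x != 0.
  by apply: (digits_poly_neq0 (f0 := [ffun => x])); rewrite shifted_eval_const.
have [T qT] := infinite_field_nonroot infK q_neq0.
pose a (i : 'I_m) := \sum_(k : 'I_N.+2)
  T ^+ (k * N.+2 ^ i)%N *: delta_mx (shift_perm k (r i)) (shift_perm k (t i)).
have entry x y : mlin_eval c a x y = \sum_f T ^+ digits_val f * shifted_eval f x y.
  rewrite /a mlin_eval_expand summxE; apply: eq_bigr => f _.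
  by rewrite mxE prodrXr.
have qE x : (q x).[T] = mlin_eval c a x (x + 1).
  rewrite entry /q horner_sum; apply: eq_bigr => f _.
  by rewrite hornerZ hornerXn mulrC.
exists a, (fun x => mlin_eval c a x (x + 1)); split=> [x|].
  by rewrite -qE; apply: qT.
apply/matrixP => i j; rewrite /cyc_mx mxE; case: ifP => [/eqP ij|ij].
  by have -> : j = i + 1 by apply: val_inj; rewrite val_addZp1 ij.
rewrite entry big1 // => f _.
have [->|/shifted_eval_supp ji] := eqVneq (shifted_eval f i j) 0; first by rewrite mulr0.
by move: ij; rewrite ji val_addZp1 eqxx.
Qed.

End CyclicEvaluation.

Lemma char_poly_conj (R : comNzRingType) n (g h A : 'M[R]_n.+1) :
  g * h = 1 -> char_poly (g * A * h) = char_poly A.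
Proof.
move=> gh; pose G := map_mx polyC g; pose H := map_mx polyC h.
have GH : G *m H = 1%:M by rewrite -map_mxM mulmxE gh map_mx1.
rewrite /char_poly; have -> : char_poly_mx (g * A * h) = G *m char_poly_mx A *m H.
  rewrite /char_poly_mx mulmxBr mulmxBl mul_mx_scalar -scalemxAl GH scalemx1.
  by rewrite -!map_mxM !mulmxE.
by rewrite !det_mulmx mulrAC -det_mulmx GH det1 mul1r.
Qed.

Lemma char_poly_companion_entries (R : comNzRingType) n (M : 'M[R]_n) (q : {poly R}) :
  q \is monic -> size q = n.+1 ->
  (forall i j : 'I_n,
     M i j = if (i == n.-1 :> nat) then - q`_j else (i.+1 == j :> nat)%:R) ->
  char_poly M = q.
Proof.
move=> q_monic q_size M_entries; have e : (size q).-1 = n by rewrite q_size.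
have char_poly_cast n' (e' : (size q).-1 = n') (A : 'M[R]_((size q).-1)) :
    char_poly (castmx (e', e') A) = char_poly A.
  by case: n' / e'; rewrite castmx_id.
rewrite -[RHS](companionmxK q_monic) -(char_poly_cast _ e).
by congr char_poly; apply/matrixP => i j; rewrite castmxE M_entries mxE /= e.
Qed.

Lemma prod_ord_lt_succ (R : comNzRingType) n (F : 'I_n -> R) (i : 'I_n) :
  \prod_(j < n | (j < i.+1)%N) F j = (\prod_(j < n | (j < i)%N) F j) * F i.
Proof.
rewrite (bigD1 i) //= mulrC; congr (_ * _); apply: eq_bigl => j.
by rewrite ltnS ltn_neqAle andbC.
Qed.

Lemma char_poly_cyc_mx (K : fieldType) n (d : 'I_n.+1 -> K) :
  (forall i, d i != 0) -> char_poly (cyc_mx d) = 'X^(n.+1) - (\prod_i d i)%:P.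
Proof.
(* Conjugating by diag(p) with p_i = d_0 ... d_(i-1) gives the companion matrix. *)
move=> d_neq0; pose p (i : 'I_n.+1) := \prod_(j < n.+1 | (j < i)%N) d j.
have p_neq0 i : p i != 0 by apply/prodf_neq0 => j _.
have gh : diag_mx (\row_i p i) * diag_mx (\row_i (p i)^-1) = 1 :> 'M[K]_n.+1.
  rewrite -mulmxE mul_diag_mx; apply/matrixP => i j; rewrite !mxE.
  by case: (eqVneq i j) => [->|_]; rewrite ?mulr1n ?mulr0n ?mulr0 ?mulfV.
rewrite -(char_poly_conj _ gh); apply: char_poly_companion_entries.
- exact: monicXnsubC.
- exact: size_XnsubC.
move=> i j; rewrite -mulmxE mul_diag_mx mul_mx_diag !mxE.
rewrite coefB coefXn coefC (ltn_eqF (ltn_ord j)) /= sub0r opprK.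
have [i_last|i_lt] := eqVneq (val i) n.
  rewrite i_last modnn; have [j0|j_neq0] := eqVneq (val j) 0%N; last by rewrite mulr0 mul0r.
  have -> : p j = 1 by rewrite /p big1 // => k; rewrite j0.
  rewrite invr1 mulr1 /p -prod_ord_lt_succ i_last; apply: eq_bigl => k; exact: ltn_ord.
have i_succ : ((val i).+1 < n.+1)%N by rewrite ltnS ltn_neqAle i_lt -ltnS ltn_ord.
rewrite (modn_small i_succ) eq_sym.
have [j_succ|] := eqVneq (val j) (val i).+1; last by rewrite mulr0 mul0r.
have -> : p j = p i * d i by rewrite -prod_ord_lt_succ; apply: eq_bigl => k; rewrite j_succ.
by rewrite mulfV ?mulf_neq0.
Qed.

Lemma closed_field_prim_root (L : closedFieldType) n :
  (0 < n)%N -> n%:R != 0 :> L -> exists e : L, n.-primitive_root e.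
Proof.
move=> n_gt0 n_neq0; have [rs Ers] := closed_field_poly_normal ('X^n - 1 : {poly L}).
rewrite (monicP (monic_Xn_sub_1 _ n_gt0)) scale1r in Ers.
have rs_uniq : uniq rs by rewrite -separable_prod_XsubC -Ers separable_Xn_sub_1.
have rs_size : size rs = n.
  by have := size_Xn_sub_1 L n_gt0; rewrite Ers size_prod_XsubC => -[].
have rs_unity : all n.-unity_root rs.
  apply/allP => x xrs; rewrite unity_rootE.
  have : root ('X^n - 1) x by rewrite Ers root_prod_XsubC.
  by rewrite /root !hornerE subr_eq0.
have /hasP [e _ prim_e] := has_prim_root n_gt0 rs_unity rs_uniq (eq_leq (esym rs_size)).
by exists e.
Qed.

Lemma factor_Xn_subC (R : fieldType) n (z e : R) :
  n.-primitive_root e -> 'X^n - (z ^+ n)%:P = \prod_(k < n) ('X - (z * e ^+ k)%:P).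
Proof.
move=> prim_e; have n_gt0 := prim_order_gt0 prim_e.
have [->|z_neq0] := eqVneq z 0.
  rewrite expr0n gtn_eqF //= subr0; under eq_bigr do rewrite mul0r subr0.
  by rewrite prodr_const card_ord.
pose zs := [seq z * e ^+ k | k : 'I_n].
rewrite [LHS](@all_roots_prod_XsubC _ _ zs) ?(monicP (monicXnsubC _ n_gt0)).
- by rewrite scale1r big_map big_enum.
- by rewrite size_XnsubC // size_map size_enum_ord.
- apply/allP => _ /mapP [k _ ->]; rewrite rootE !hornerE.
  by rewrite exprMn exprAC (prim_expr_order prim_e) expr1n mulr1 subrr.
rewrite uniq_rootsE map_inj_uniq ?enum_uniq // => i j /(mulfI z_neq0) /eqP.
by rewrite (eq_prim_root_expr prim_e) !modn_small // => /eqP /val_inj.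
Qed.

Lemma cyc_mx_char_poly_roots (K : fieldType) (L : closedFieldType) (f : {rmorphism K -> L})
    n (d : 'I_n.+1 -> K) :
  (forall i, d i != 0) -> n.+1%:R != 0 :> L ->
  exists (z e : L), [/\ z != 0, n.+1.-primitive_root e &
    char_poly (map_mx f (cyc_mx d)) = \prod_(k < n.+1) ('X - (z * e ^+ k)%:P)].
Proof.
move=> d_neq0 n_neq0; pose D := \prod_i d i.
have [z z_root] : exists z, root ('X^(n.+1) - (f D)%:P) z.
  by apply/closed_rootP; rewrite size_XnsubC.
have zn : z ^+ n.+1 = f D by move: z_root; rewrite rootE !hornerE subr_eq0 => /eqP.
have fD_neq0 : f D != 0 by rewrite fmorph_eq0; apply/prodf_neq0 => i _.
have [e prim_e] := closed_field_prim_root (ltn0Sn n) n_neq0.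
exists z, e; split=> //; first by apply: contra_neq fD_neq0 => z0; rewrite -zn z0 expr0n.
rewrite -map_char_poly char_poly_cyc_mx // rmorphB /= map_polyXn map_polyC /= -zn.
exact: factor_Xn_subC.
Qed.

Lemma coprime_pchar_natr_neq0 (K : fieldType) n :
  (0 < n)%N -> (forall q, q \in [pchar K] -> coprime q n) -> n%:R != 0 :> K.
Proof.
move=> n_gt0 coprime_n; apply/negP => n0; have [p pK] := natf0_pchar n_gt0 n0.
have := coprime_n p pK; rewrite prime_coprime ?(pcharf_prime pK) //.
by rewrite (dvdn_pcharf pK) n0.
Qed.

Theorem theorem1p11 (K : fieldType) (n m : nat) (c : {perm 'I_m} -> K) :
  infinite_field K -> (2 <= n)%N ->
  ~ mlin_PI n c -> ~ mlin_central n c ->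
  (exists (a : 'I_m -> 'M[K]_n) (d : 'I_n -> K),
      (forall i, d i != 0) /\ mlin_eval c a = cyc_mx d)
  /\
  ((forall q : nat, q \in [pchar K] -> coprime q n) ->
   exists a : 'I_m -> 'M[K]_n,
     forall (L : closedFieldType) (f : {rmorphism K -> L}),
       exists (z e : L),
         [/\ z != 0, n.-primitive_root e &
             char_poly (map_mx f (mlin_eval c a))
             = \prod_(k < n) ('X - (z * e ^+ k)%:P)]).
Proof.
case: n => [|[|N]] // infK _ notPI notcentral.
have [r [t [x0 [y0 [x0y0 E0_neq0]]]]] := mlin_eval_delta_offdiag notPI notcentral.
have [pi [pi_x0 pi_y0]] := @perm_map2 _ x0 y0 0 1 x0y0 isT.
have [a [d [d_neq0 Ea]]] := cyc_mx_in_image pi_x0 pi_y0 E0_neq0 infK.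
split=> [|coprime_n]; first by exists a, d.
exists a => L f; rewrite Ea; apply: cyc_mx_char_poly_roots => //.
by rewrite -(rmorph_nat f) fmorph_eq0 coprime_pchar_natr_neq0.
Qed.
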